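(* Consider the dynamic panel logit AR(3) model with $T=4$: $(Y^{(0)},X,A)$ has an arbitrary joint distribution with $Y^{(0)}=(Y_{-2},Y_{-1},Y_0)\in\{0,1\}^3$, $X=(X_1,\dots,X_4)\in\mathbb{R}^{K\times4}$, $A\in\mathbb{R}$, and conditionally on $(Y^{(0)},X,A)$ the outcomes $Y=(Y_1,\dots,Y_4)$ satisfy, for $t\in\{1,\dots,4\}$, $$\Pr(Y_t=1\mid Y_{-2},\dots,Y_{t-1},X,A)=\frac{\exp(X_t'\beta_0+\sum_{\ell=1}^3Y_{t-\ell}\gamma_{0,\ell}+A)}{1+\exp(X_t'\beta_0+\sum_{\ell=1}^3Y_{t-\ell}\gamma_{0,\ell}+A)},$$ with true parameters $\beta_0\in\mathbb{R}^K$, $\gamma_0=(\gamma_{0,1},\gamma_{0,2},\gamma_{0,3})$. Let $x_{ts}=x_t-x_s$ and for $y\in\{0,1\}^4$, $\gamma=(\gamma_1,\gamma_2,\gamma_3)$ define $$m(y,x,\beta,\gamma)=\begin{cases}-e^{\gamma_1}&y=(0,0,1,0),\\ -1&y=(0,0,1,1),\\ e^{x_{32}'\beta-\gamma_3}[e^{\gamma_1}-e^{\gamma_2}]&y=(0,1,0,0),\\ e^{\gamma_1-\gamma_2}-1&y=(0,1,0,1),\\ -1&(y_1,y_2,y_3)=(0,1,1),\\ e^{x_{31}'\beta+\gamma_2-\gamma_2}&(y_1,y_2,y_3)=(1,0,0),\\ e^{x_{21}'\beta+\gamma_1-\gamma_2+\gamma_3}&(y_1,y_2,y_3)=(1,0,1),\\0&\text{otherwise}.\end{cases}$$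 Assume that for all $\epsilon>0$, $\Pr(Y^{(0)}=(0,1,0),\|X_3-X_4\|\le\epsilon)>0$, and that the expectation below is well-defined. Then $$\mathbb{E}\big[m(Y,X,\beta_0,(\gamma_{0,1},\gamma_2,\gamma_{0,3}))\mid Y^{(0)}=(0,1,0),X_3=X_4\big]=0$$ if and only if $\gamma_2=\gamma_{0,2}$.
   Context: Expectations are taken under the true data distribution (generated with $\beta_0,\gamma_0$). $Y^{(0)}=(0,1,0)$ means $Y_{-2}=0$, $Y_{-1}=1$, $Y_0=0$. The function $m$ is the paper's $m^{(c,p,4)}_{(0,1,0_{p-2})}$ with $p=3$ (so $\gamma_p=\gamma_3$, $\gamma_{p-1}=\gamma_2$); the entry for $(y_1,y_2,y_3)=(1,0,0)$ equals $e^{x_{31}'\beta}$. *)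

From HB Require Import structures.
From mathcomp Require Import all_boot all_order all_algebra.
From mathcomp Require Import all_classical all_reals all_analysis.
Set Implicit Arguments. Unset Strict Implicit. Unset Printing Implicit Defensive.
Import Order.TTheory GRing.Theory Num.Theory.
Local Open Scope ring_scope.

Section Logit.
Variable R : realType.
Variable K : nat.

Definition Lambda (z : R) : R := expR z / (1 + expR z).

(* x_t' beta, with t : 'I_4 the 0-based index of period t+1;
   x : 'M_(K,4) has columns x_1,...,x_4 *)
Definition xbeta (x : 'M[R]_(K,4)) (beta : 'cV[R]_K) (t : 'I_4) : R :=
  ((col t x)^T *m beta) ord0 ord0.

Definition xdbeta (x : 'M[R]_(K,4)) (beta : 'cV[R]_K) (t s : 'I_4) : R :=
  ((col t x - col s x)^T *m beta) ord0 ord0.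

(* full outcome path [Y_{-2}; Y_{-1}; Y_0; Y_1; ...; Y_4] *)
Definition path3 (y0 : bool * bool * bool) (y : {ffun 'I_4 -> bool}) : seq bool :=
  [:: y0.1.1; y0.1.2; y0.2; y ord0; y (inord 1); y (inord 2); y (inord 3)].

(* linear index of period t+1:  x_{t+1}'b + sum_l Y_{t+1-l} g_l + a *)
Definition lindex (y0 : bool * bool * bool) (y : {ffun 'I_4 -> bool})
    (x : 'M[R]_(K,4)) (a : R) (beta : 'cV[R]_K) (g1 g2 g3 : R) (t : 'I_4) : R :=
  let s := path3 y0 y in
  xbeta x beta t
  + g1 * (nth false s (t + 2)%N)%:R
  + g2 * (nth false s (t + 1)%N)%:R
  + g3 * (nth false s t)%:R + a.

Definition prob_y (y0 : bool * bool * bool) (x : 'M[R]_(K,4)) (a : R)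
    (beta : 'cV[R]_K) (g1 g2 g3 : R) (y : {ffun 'I_4 -> bool}) : R :=
  \prod_(t < 4)
    (if y t then Lambda (lindex y0 y x a beta g1 g2 g3 t)
     else 1 - Lambda (lindex y0 y x a beta g1 g2 g3 t)).

Definition m_fun (y : {ffun 'I_4 -> bool}) (x : 'M[R]_(K,4))
    (beta : 'cV[R]_K) (g1 g2 g3 : R) : R :=
  let x32 := xdbeta x beta (inord 2) (inord 1) in
  let x31 := xdbeta x beta (inord 2) (inord 0) in
  let x21 := xdbeta x beta (inord 1) (inord 0) in
  match y ord0, y (inord 1), y (inord 2), y (inord 3) with
  | false, false, true, false => - expR g1
  | false, false, true, true => -1
  | false, true, false, false => expR (x32 - g3) * (expR g1 - expR g2)
  | false, true, false, true => expR (g1 - g2) - 1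
  | false, true, true, _ => -1
  | true, false, false, _ => expR (x31 + g2 - g2)
  | true, false, true, _ => expR (x21 + g1 - g2 + g3)
  | _, _, _, _ => 0
  end.

Definition cond_mean_m (y0 : bool * bool * bool) (x : 'M[R]_(K,4)) (a : R)
    (beta0 : 'cV[R]_K) (g01 g02 g03 : R) (beta : 'cV[R]_K) (g1 g2 g3 : R) : R :=
  \sum_(y : {ffun 'I_4 -> bool})
     m_fun y x beta g1 g2 g3 * prob_y y0 x a beta0 g01 g02 g03 y.

End Logit.

From HB Require Import structures.
From mathcomp Require Import all_boot all_order all_algebra.
From mathcomp Require Import all_classical all_reals all_analysis.
From mathcomp Require Import measurable_realfun ring.
Set Implicit Arguments. Unset Strict Implicit. Unset Printing Implicit Defensive.
Import Order.TTheory GRing.Theory Num.Theory.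
Local Open Scope ring_scope.

(* Summing m against the sixteen path probabilities started from
   Y^(0) = (0,1,0), on the event X_3 = X_4, gives
   E[m | Y^(0), X, A] = (e^{g02} - e^{g2}) D(X, A) with D > 0 an explicit
   combination of logistic probabilities.  Since D is positive, its integral
   against the law of (X, A) is nonzero, so the integral of the conditional
   mean vanishes exactly when e^{g02} = e^{g2}. *)

Section FfunFour.
Variable T : finType.

Definition ffun4 (p : T * T * T * T) : {ffun 'I_4 -> T} :=
  [ffun i : 'I_4 => nth p.2 [:: p.1.1.1; p.1.1.2; p.1.2; p.2] i].

Definition ffun4_coords (y : {ffun 'I_4 -> T}) : T * T * T * T :=
  (y ord0, y (inord 1), y (inord 2), y (inord 3)).

Lemma ffun4K : cancel ffun4 ffun4_coords.
Proof. by case=> [[[a b] c] e]; rewrite /ffun4_coords !ffunE /= !inordK. Qed.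

Lemma ffun4_coordsK : cancel ffun4_coords ffun4.
Proof.
move=> y; apply/ffunP => i; rewrite ffunE.
by case: i => [[|[|[|[|//]]]] ?]; congr (y _); apply: val_inj; rewrite /= ?inordK.
Qed.

Lemma sum_ffun4 (V : nmodType) (F : {ffun 'I_4 -> T} -> V) :
  \sum_(y : {ffun 'I_4 -> T}) F y =
  \sum_(b0 : T) \sum_(b1 : T) \sum_(b2 : T) \sum_(b3 : T) F (ffun4 (b0, b1, b2, b3)).
Proof.
rewrite !pair_big /= (reindex ffun4); last first.
  by exists ffun4_coords => y _; [exact: ffun4K | exact: ffun4_coordsK].
by apply: eq_bigr => [[[[a b] c] e]].
Qed.

End FfunFour.

Lemma prod_ord4 (R : pzSemiRingType) (F : 'I_4 -> R) :
  \prod_(t < 4) F t = F ord0 * F (inord 1) * F (inord 2) * F (inord 3).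
Proof.
rewrite !big_ord_recl big_ord0 mulr1 !mulrA.
by congr (_ * _ * _ * _); congr F; apply: val_inj; rewrite /= inordK.
Qed.

Section Logistic.
Variable R : realType.

Lemma Lambda_gt0 (z : R) : 0 < Lambda z.
Proof. by rewrite divr_gt0 ?addr_gt0 ?expR_gt0. Qed.

Lemma Lambda_lt1 (z : R) : Lambda z < 1.
Proof. by rewrite ltr_pdivrMr ?addr_gt0 ?expR_gt0 // mul1r ltrDr. Qed.

Lemma LambdaC (z : R) : 1 - Lambda z = (1 + expR z)^-1.
Proof.
have ez_neq0 : 1 + expR z != 0 by rewrite lt0r_neq0 ?addr_gt0 ?expR_gt0.
by rewrite /Lambda -[X in X - _](divff ez_neq0) -mulrBl addrK mul1r.
Qed.

Lemma Lambda_if (b : bool) (z : R) :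
  (if b then Lambda z else 1 - Lambda z) = (if b then expR z else 1) / (1 + expR z).
Proof. by case: b; rewrite ?LambdaC ?mul1r. Qed.

End Logistic.

Lemma xdbetaE (R : realType) (K : nat) (x : 'M[R]_(K,4)) (b : 'cV[R]_K) (t s : 'I_4) :
  xdbeta x b t s = xbeta x b t - xbeta x b s.
Proof. by rewrite /xdbeta /xbeta (raddfB (@trmx _ _ _)) mulmxBl !mxE. Qed.

Section Factorization.
Variables (R : realType) (K : nat).

(* [b_t] stands for x_t'beta0 and [g2'] for the candidate value of gamma_2. *)
Definition moment_cofactor (b1 b2 b3 a g1 g2 g3 g2' : R) : R :=
  expR (b3 - b2 - g3) * (1 - Lambda (b1 + g2 + a)) * Lambda (b2 + g3 + a)
    * (1 - Lambda (b3 + g1 + a)) * (1 - Lambda (b3 + g2 + a))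
  + (expR g1 * (1 - Lambda (b1 + g2 + a)) * Lambda (b2 + g3 + a)
       * (1 - Lambda (b3 + g1 + a)) * Lambda (b3 + g2 + a)
     + expR (b2 - b1 + g1 + g3) * Lambda (b1 + g2 + a)
       * (1 - Lambda (b2 + g1 + g3 + a)) * Lambda (b3 + g2 + a))
    / (expR g2' * expR g2).

Lemma moment_cofactor_gt0 (b1 b2 b3 a g1 g2 g3 g2' : R) :
  0 < moment_cofactor b1 b2 b3 a g1 g2 g3 g2'.
Proof.
rewrite /moment_cofactor.
by repeat first [apply: Lambda_gt0 | rewrite subr_gt0 Lambda_lt1
  | apply: addr_gt0 | apply: mulr_gt0 | rewrite invr_gt0 | apply: expR_gt0].
Qed.

Lemma cond_mean_m_factor (x : 'M[R]_(K,4)) (a : R) (beta0 : 'cV[R]_K)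
    (g1 g2 g3 g2' : R) :
  col (inord 2) x = col (inord 3) x ->
  cond_mean_m (false, true, false) x a beta0 g1 g2 g3 beta0 g1 g2' g3 =
  (expR g2 - expR g2') * moment_cofactor (xbeta x beta0 ord0)
     (xbeta x beta0 (inord 1)) (xbeta x beta0 (inord 2)) a g1 g2 g3 g2'.
Proof.
move=> x34.
have xb34 : xbeta x beta0 (inord 3) = xbeta x beta0 (inord 2) by rewrite /xbeta x34.
have x0 : (inord 0 : 'I_4) = ord0 := inord_val ord0.
rewrite /cond_mean_m sum_ffun4.
(* Rewriting in the expanded sixteen-term sum is very slow, so the summand is
   normalised for symbolic paths first; expanding then only needs computation. *)
under eq_bigr => b0 _ do under eq_bigr => b1 _ do under eq_bigr => b2 _ do
  under eq_bigr => b3 _ do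
  rewrite /m_fun /prob_y prod_ord4 !Lambda_if /lindex /path3 /ffun4 !ffunE /=
    !inordK //= !mulr_natr !mulrb ?mulr0n ?mulr1n !xdbetaE x0 xb34 !expRD !expRN.
rewrite !big_bool /= expR0 /moment_cofactor !LambdaC /Lambda !expRD !expRN.
field.
by rewrite !lt0r_neq0 ?addr_gt0 ?mulr_gt0 ?expR_gt0.
Qed.

End Factorization.

Section IntegralOfScaledPositive.
Context d (T : measurableType d) (R : realType) (mu : {measure set T -> \bar R}).
Hypothesis mu_gt0 : (0 < mu setT)%E.

Lemma integral_ae_gt0_neq0 (g : T -> R) :
  measurable_fun setT (EFin \o g) -> {ae mu, forall x, 0 < g x} ->
  (\int[mu]_x (g x)%:E != 0)%E.
Proof.
move=> mg g_gt0; apply/eqP => int0.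
have int_abs0 : (\int[mu]_x `|(g x)%:E| = 0)%E.
  rewrite -int0; apply: ae_eq_integral => //; first exact: measurableT_comp.
  by apply: filterS g_gt0 => x gx _; rewrite gee0_abs // lee_fin ltW.
have g0 := (ae_eq_integral_abs mu measurableT mg).1 int_abs0.
have ae_false : {ae mu, forall x : T, False}.
  by move: g_gt0 g0; apply: filterS2 => x gx /(_ I) /= [gx0]; rewrite gx0 ltxx in gx.
exact: (filter_const (FF := ae_properfilter_algebraOfSetsType mu_gt0) ae_false).
Qed.

Lemma integral_ae_scale_eq0 (f D : T -> R) (c : R) :
  mu.-integrable setT (EFin \o f) -> {ae mu, forall x, 0 < D x} ->
  {ae mu, forall x, f x = c * D x} ->
  (\int[mu]_x (f x)%:E = 0)%E <-> c = 0.
Proof.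
move=> intf D_gt0 fE; split=> [int0|c0]; last first.
  rewrite (ae_eq_integral (cst 0%E)) ?integral0 //; first exact: measurable_int intf.
  by apply: filterS fE => x -> _; rewrite c0 mul0r.
apply/eqP/negPn/negP => c_neq0.
have : (\int[mu]_x (c^-1 * f x)%:E != 0)%E.
  apply: integral_ae_gt0_neq0.
    apply/measurable_EFinP/measurable_funM => //.
    exact/measurable_EFinP/(measurable_int _ intf).
  by apply: filterS2 D_gt0 fE => x Dx ->; rewrite mulKf.
under eq_integral do rewrite EFinM.
by rewrite integralZl // int0 mule0 eqxx.
Qed.

End IntegralOfScaledPositive.

(* (Omega, Q) carries the conditional law of (X, A) given the conditioning event
   {Y^(0) = (0,1,0), X_3 = X_4}; the conditional expectation of m given this event
   is (tower property) the Q-integral of E[m | Y^(0) = (0,1,0), X, A]. *)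
Theorem theorem3 (R : realType) (K : nat) (d : measure_display)
    (Omega : measurableType d) (Q : probability Omega R)
    (X : Omega -> 'M[R]_(K,4)) (A : Omega -> R)
    (beta0 : 'cV[R]_K) (g01 g02 g03 g2 : R) :
  {ae Q, forall w, col (inord 2) (X w) = col (inord 3) (X w)} ->
  Q.-integrable setT (fun w =>
    (cond_mean_m (false, true, false) (X w) (A w) beta0 g01 g02 g03
                 beta0 g01 g2 g03)%:E) ->
  ((\int[Q]_w (cond_mean_m (false, true, false) (X w) (A w) beta0 g01 g02 g03
                 beta0 g01 g2 g03)%:E = 0)%E <-> g2 = g02).
Proof.
move=> X34 int_m.
have Q_gt0 : (0 < Q setT)%E by rewrite probability_setT lte01.
rewrite (integral_ae_scale_eq0 Q_gt0 int_m
  (D := fun w => moment_cofactor (xbeta (X w) beta0 ord0) (xbeta (X w) beta0 (inord 1))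
                   (xbeta (X w) beta0 (inord 2)) (A w) g01 g02 g03 g2)
  (c := expR g02 - expR g2)).
- split=> [/eqP|->]; last by rewrite subrr.
  by rewrite subr_eq0 => /eqP/expR_inj.
- by apply: aeW => w; exact: moment_cofactor_gt0.
- by apply: filterS X34 => w; exact: cond_mean_m_factor.
Qed.
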